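(* Let $Y$ be a random variable with values in $[0,1]$ and continuous distribution function $F$. Then the following two properties hold simultaneously: (a) for every $a\in(0,1)$, \[ 2\min\{Y,1-Y\}\,\big|\,\big(2\min\{Y,1-Y\}\le a\big) \;\stackrel{\mathcal D}{=}\; a\cdot 2\min\{Y,1-Y\}, \] and (b) $I(Y\le 1/2)$ and $\max\{Y,1-Y\}$ are independent, if and only if there exist $c\in[0,1]$ and $\delta>0$ such that \[ F(x)=\begin{cases} c\,2^\delta x^\delta, & x\in[0,1/2],\\ 1-(1-c)\,2^\delta(1-x)^\delta, & x\in[1/2,1].\end{cases} \]
   Context: For a random variable $X$ and an event $A$ of positive probability, $X\,|\,A$ denotes the conditional distribution of $X$ given $A$. $I(\cdot)$ denotes the indicator of an event. $\stackrel{\mathcal D}{=}$ denotes equality in distribution. *)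

From Stdlib Require Import Reals Lra.
Open Scope R_scope.

Record prob_space := {
  Omega : Type;
  meas : (Omega -> Prop) -> Prop;
  P : (Omega -> Prop) -> R;
  meas_full : meas (fun _ => True);
  meas_compl : forall A, meas A -> meas (fun w => ~ A w);
  meas_union : forall A : nat -> Omega -> Prop,
      (forall n, meas (A n)) -> meas (fun w => exists n, A n w);
  P_ext : forall A B : Omega -> Prop, (forall w, A w <-> B w) -> P A = P B;
  P_nonneg : forall A, meas A -> 0 <= P A;
  P_full : P (fun _ => True) = 1;
  P_sigma_add : forall A : nat -> Omega -> Prop,
      (forall n, meas (A n)) ->
      (forall m n w, m <> n -> A m w -> A n w -> False) ->
      infinite_sum (fun n => P (A n)) (P (fun w => exists n, A n w))
}.

Definition random_variable (S : prob_space) (X : Omega S -> R) : Prop :=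
  forall x, meas S (fun w => X w <= x).

Definition cdf (S : prob_space) (X : Omega S -> R) (x : R) : R :=
  P S (fun w => X w <= x).

Definition indicator (S : prob_space) (A : Omega S -> Prop)
    (dec : forall w, {A w} + {~ A w}) : Omega S -> R :=
  fun w => if dec w then 1 else 0.

Definition cond_eq_in_dist (S : prob_space) (X : Omega S -> R)
    (A : Omega S -> Prop) (Z : Omega S -> R) : Prop :=
  0 < P S A /\
  forall z, P S (fun w => X w <= z /\ A w) / P S A = P S (fun w => Z w <= z).

Definition indep (S : prob_space) (X1 X2 : Omega S -> R) : Prop :=
  forall x y, P S (fun w => X1 w <= x /\ X2 w <= y) =
              P S (fun w => X1 w <= x) * P S (fun w => X2 w <= y).

(* x^d for x >= 0, d > 0, with 0^d = 0. *)
Definition rpow (x d : R) : R := if Rle_dec x 0 then 0 else Rpower x d.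

From Stdlib Require Import Reals Lra Lia ZArith.
From Stdlib Require Import Classical FunctionalExtensionality PropExtensionality.
Open Scope R_scope.

(* Write Z = 2 min(Y, 1 - Y) with distribution function G, and F for the
   distribution function of Y.  Conditioning Z on {Z <= a} and dividing by a
   leaves its law unchanged exactly when G(s a) = G(s) G(a) on (0, 1); the
   monotone solutions of this Cauchy equation are the powers t^delta, with
   delta > 0 because F is continuous at 0 and 1.  Since G(2x) = F(x) + 1 - F(1-x),
   the power law prescribes the total mass of the two tails beyond x and 1 - x,
   and independence of I(Y <= 1/2) and max(Y, 1 - Y) says that the right tail
   always carries the same share 1 - F(1/2) of it; together these determine F
   on both halves. *)

Lemma infinite_sum_stationary (u : nat -> R) (N : nat) (l : R) :
  (forall n, (N <= n)%nat -> sum_f_R0 u n = l) -> infinite_sum u l.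
Proof.
  intros Hu eps Heps. exists N. intros n Hn.
  rewrite Hu by lia. unfold Rdist. rewrite Rminus_diag, Rabs_R0. lra.
Qed.

Section ProbabilitySpace.

Variable Sp : prob_space.
Implicit Types A B : Omega Sp -> Prop.

Lemma meas_ext A B : (forall w, A w <-> B w) -> meas Sp A -> meas Sp B.
Proof.
  intros HAB HA.
  replace B with A; [exact HA|].
  apply functional_extensionality; intro w. apply propositional_extensionality, HAB.
Qed.

Lemma meas_False : meas Sp (fun _ => False).
Proof. apply (meas_ext (fun w => ~ True)); [tauto|]. apply meas_compl, meas_full. Qed.

Lemma meas_or A B : meas Sp A -> meas Sp B -> meas Sp (fun w => A w \/ B w).
Proof.
  intros HA HB.
  apply (meas_ext (fun w => exists n : nat, (if Nat.eqb n 0 then A else B) w)).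
  - intro w; split.
    + intros [[|n] H]; auto.
    + intros [H|H]; [exists 0%nat | exists 1%nat]; auto.
  - apply meas_union; intros [|n]; auto.
Qed.

Lemma meas_and A B : meas Sp A -> meas Sp B -> meas Sp (fun w => A w /\ B w).
Proof.
  intros HA HB.
  apply (meas_ext (fun w => ~ (~ A w \/ ~ B w))).
  - intro w; split; [intro H; split; apply NNPP; tauto | tauto].
  - apply meas_compl, meas_or; apply meas_compl; assumption.
Qed.

Lemma P_False : P Sp (fun _ => False) = 0.
Proof.
  assert (Hsum : infinite_sum (fun _ => P Sp (fun _ => False)) (P Sp (fun _ => False))).
  { pose proof (P_sigma_add Sp (fun _ _ => False) (fun _ => meas_False)) as H.
    cbv beta in H.
    rewrite (P_ext Sp (fun w => exists n : nat, False) (fun _ => False)) in H by firstorder.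
    apply H; tauto. }
  set (p := P Sp (fun _ => False)) in *.
  destruct (Rle_lt_or_eq_dec 0 p) as [Hp|Hp]; [apply P_nonneg, meas_False | | auto].
  (* the partial sums [(n + 1) p] cannot converge to [p > 0] *)
  destruct (Hsum p Hp) as [N HN].
  specialize (HN (S N) (Nat.le_succ_diag_r N)).
  rewrite sum_cte in HN. unfold Rdist in HN.
  rewrite !S_INR in HN. pose proof (pos_INR N).
  rewrite Rabs_right in HN by nra. nra.
Qed.

Lemma P_or_disjoint A B :
  meas Sp A -> meas Sp B -> (forall w, A w -> B w -> False) ->
  P Sp (fun w => A w \/ B w) = P Sp A + P Sp B.
Proof.
  intros HA HB Hdisj.
  set (E := fun n : nat => match n with 0 => A | 1 => B | _ => fun _ => False end).
  assert (HE : forall n, meas Sp (E n)) by (intros [|[|n]]; auto using meas_False).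
  pose proof (P_sigma_add Sp E HE) as Hsum.
  rewrite (P_ext Sp _ (fun w => A w \/ B w)) in Hsum.
  2:{ intro w; split.
      - intros [[|[|n]] Hn]; simpl in Hn; tauto.
      - intros [Hw|Hw]; [exists 0%nat | exists 1%nat]; exact Hw. }
  apply (uniqueness_sum (fun n => P Sp (E n))).
  - apply Hsum. intros [|[|m]] [|[|n]] w Hmn; simpl; try tauto; eauto.
  - apply (infinite_sum_stationary _ 1).
    intros n Hn. induction n as [|n IH]; [lia|].
    destruct n as [|n]; [reflexivity|].
    simpl sum_f_R0 in *. rewrite IH by lia. simpl. rewrite P_False. ring.
Qed.

Lemma P_not A : meas Sp A -> P Sp (fun w => ~ A w) = 1 - P Sp A.
Proof.
  intro HA.
  rewrite <- (P_full Sp), (P_ext Sp (fun _ => True) (fun w => A w \/ ~ A w))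
    by (intro w; pose proof (classic (A w)); tauto).
  rewrite P_or_disjoint by (auto using meas_compl). ring.
Qed.

Lemma P_mono A B : meas Sp A -> meas Sp B -> (forall w, A w -> B w) -> P Sp A <= P Sp B.
Proof.
  intros HA HB HAB.
  assert (HBA : meas Sp (fun w => B w /\ ~ A w)) by (auto using meas_and, meas_compl).
  rewrite (P_ext Sp B (fun w => A w \/ (B w /\ ~ A w)))
    by (intro w; pose proof (classic (A w)); firstorder).
  rewrite P_or_disjoint by (auto; tauto).
  pose proof (P_nonneg Sp _ HBA). lra.
Qed.

Lemma P_le_1 A : meas Sp A -> P Sp A <= 1.
Proof. intro HA. rewrite <- (P_full Sp). apply P_mono; auto using meas_full. Qed.

Lemma indicator_le_iff A (dec : forall w, {A w} + {~ A w}) x w :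
  indicator Sp A dec w <= x <-> (A w /\ 1 <= x) \/ (~ A w /\ 0 <= x).
Proof. unfold indicator. destruct (dec w); intuition lra. Qed.

Lemma indep_indicator_iff A (dec : forall w, {A w} + {~ A w}) (X : Omega Sp -> R) :
  indep Sp (indicator Sp A dec) X <->
  forall y, P Sp (fun w => ~ A w /\ X w <= y) =
            P Sp (fun w => ~ A w) * P Sp (fun w => X w <= y).
Proof.
  unfold indep. split.
  - intros Hind y. specialize (Hind 0 y).
    rewrite !(P_ext Sp (fun w => indicator Sp A dec w <= 0) (fun w => ~ A w)) in Hind
      by (intro w; rewrite indicator_le_iff; intuition lra).
    rewrite <- Hind. apply P_ext; intro w. rewrite indicator_le_iff; intuition lra.
  - intros Hnot x y.
    destruct (Rlt_dec x 0) as [Hx|Hx]; [|destruct (Rlt_dec x 1) as [Hx1|Hx1]].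
    + rewrite (P_ext Sp _ (fun _ => False)),
        (P_ext Sp (fun w => indicator Sp A dec w <= x) (fun _ => False)), P_False
        by (intro w; rewrite indicator_le_iff; intuition lra).
      ring.
    + rewrite (P_ext Sp _ (fun w => ~ A w /\ X w <= y)),
        (P_ext Sp (fun w => indicator Sp A dec w <= x) (fun w => ~ A w))
        by (intro w; rewrite indicator_le_iff; intuition lra).
      apply Hnot.
    + rewrite (P_ext Sp _ (fun w => X w <= y)),
        (P_ext Sp (fun w => indicator Sp A dec w <= x) (fun _ => True)), P_full
        by (intro w; rewrite indicator_le_iff; pose proof (classic (A w)); intuition lra).
      ring.
Qed.

End ProbabilitySpace.

Lemma continuity_pt_ball (f : R -> R) (x0 e : R) :
  continuity_pt f x0 -> 0 < e ->
  exists del, 0 < del /\ forall x, Rabs (x - x0) < del -> Rabs (f x - f x0) < e.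
Proof.
  intros Hf He. destruct (Hf e He) as [del [Hdel Hball]].
  exists del; split; [exact Hdel|]. intros x Hx.
  destruct (Req_dec x x0) as [->|Hne].
  - rewrite Rminus_diag, Rabs_R0. exact He.
  - apply (Hball x). split; [split; [exact I | auto] | exact Hx].
Qed.

Section RandomVariable.

Variable Sp : prob_space.
Variable Y : Omega Sp -> R.
Hypothesis hY : random_variable Sp Y.

Lemma meas_lt x : meas Sp (fun w => Y w < x).
Proof.
  apply (meas_ext Sp (fun w => exists n : nat, Y w <= x - / INR (S n))).
  - intro w; split.
    + intros [n Hn]. pose proof (Rinv_0_lt_compat _ (lt_0_INR (S n) (Nat.lt_0_succ n))). lra.
    + intro Hw. destruct (archimed_cor1 (x - Y w)) as [N [HN HN0]]; [lra|].
      exists (pred N). rewrite Nat.succ_pred_pos by exact HN0. lra.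
  - apply meas_union; intro n; apply hY.
Qed.

Lemma meas_ge x : meas Sp (fun w => x <= Y w).
Proof. apply (meas_ext Sp (fun w => ~ Y w < x)); [intro; lra | apply meas_compl, meas_lt]. Qed.

Lemma meas_gt x : meas Sp (fun w => x < Y w).
Proof. apply (meas_ext Sp (fun w => ~ Y w <= x)); [intro; lra | apply meas_compl, hY]. Qed.

Lemma P_gt x : P Sp (fun w => x < Y w) = 1 - cdf Sp Y x.
Proof. unfold cdf. rewrite <- P_not by apply hY. apply P_ext; intro; lra. Qed.

Lemma P_in_Ioc a b : a <= b -> P Sp (fun w => a < Y w /\ Y w <= b) = cdf Sp Y b - cdf Sp Y a.
Proof.
  intro Hab. unfold cdf.
  rewrite (P_ext Sp (fun w => Y w <= b) (fun w => Y w <= a \/ (a < Y w /\ Y w <= b)))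
    by (intro; lra).
  rewrite P_or_disjoint; [ring | apply hY | | intros; lra].
  apply meas_and; [apply meas_gt | apply hY].
Qed.

Hypothesis hcont : forall x, continuity_pt (cdf Sp Y) x.

Lemma P_eq x : P Sp (fun w => Y w = x) = 0.
Proof.
  assert (Hx : meas Sp (fun w => Y w = x)).
  { apply (meas_ext Sp (fun w => Y w <= x /\ x <= Y w)); [intro; lra|].
    apply meas_and; [apply hY | apply meas_ge]. }
  apply Rle_antisym; [| apply P_nonneg, Hx].
  apply Rnot_lt_le; intro Hp.
  destruct (continuity_pt_ball _ _ _ (hcont x) Hp) as [del [Hdel Hball]].
  (* an atom at [x] lies in [(x - del/2, x]], whose mass continuity makes smaller *)
  assert (Hatom : P Sp (fun w => Y w = x) <= P Sp (fun w => x - del / 2 < Y w /\ Y w <= x)).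
  { apply P_mono; [exact Hx | apply meas_and; [apply meas_gt | apply hY] | intros w ->; lra]. }
  rewrite P_in_Ioc in Hatom by lra.
  specialize (Hball (x - del / 2)). rewrite !Rabs_left in Hball by lra. lra.
Qed.

Lemma P_lt x : P Sp (fun w => Y w < x) = cdf Sp Y x.
Proof.
  unfold cdf.
  rewrite (P_ext Sp (fun w => Y w <= x) (fun w => Y w < x \/ Y w = x)) by (intro; lra).
  rewrite P_or_disjoint, P_eq; [ring | apply meas_lt | | intros; lra].
  apply (meas_ext Sp (fun w => Y w <= x /\ x <= Y w)); [intro; lra|].
  apply meas_and; [apply hY | apply meas_ge].
Qed.

Lemma P_ge x : P Sp (fun w => x <= Y w) = 1 - cdf Sp Y x.
Proof. rewrite <- P_lt, <- P_not by apply meas_lt. apply P_ext; intro; lra. Qed.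

Lemma P_in_Icc a b : a <= b -> P Sp (fun w => a <= Y w /\ Y w <= b) = cdf Sp Y b - cdf Sp Y a.
Proof.
  intro Hab. rewrite <- (P_lt a). unfold cdf.
  rewrite (P_ext Sp (fun w => Y w <= b) (fun w => Y w < a \/ (a <= Y w /\ Y w <= b)))
    by (intro; lra).
  rewrite P_or_disjoint; [ring | apply meas_lt | | intros; lra].
  apply meas_and; [apply meas_ge | apply hY].
Qed.

End RandomVariable.

Lemma INR_floor x : 0 <= x -> exists m : nat, INR m <= x < INR m + 1.
Proof.
  intro Hx. destruct (base_Int_part x) as [Hlo Hhi].
  assert (Hz : (-1 < Int_part x)%Z) by (apply lt_IZR; lra).
  exists (Z.to_nat (Int_part x)). rewrite INR_IZR_INZ, Z2Nat.id by lia. lra.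
Qed.

Lemma Rabs_mult_INR_bounded e k : (forall n, Rabs e * INR (S n) <= k) -> e = 0.
Proof.
  intro Hk. destruct (Req_dec e 0) as [|He]; [assumption | exfalso].
  pose proof (Rabs_pos_lt e He) as Hpos. set (a := Rabs e) in *.
  specialize (Hk 0%nat) as Hk0. simpl in Hk0.
  destruct (archimed_cor1 (a / (k + 1))) as [N [HN HN0]]; [apply Rdiv_lt_0_compat; lra|].
  specialize (Hk (pred N)). rewrite Nat.succ_pred_pos in Hk by exact HN0.
  assert (HNpos : 0 < INR N) by (apply lt_0_INR; exact HN0).
  apply (Rmult_lt_compat_r (INR N * (k + 1))) in HN; [|nra].
  replace (/ INR N * (INR N * (k + 1))) with (k + 1) in HN by (field; lra).
  replace (a / (k + 1) * (INR N * (k + 1))) with (a * INR N) in HN by (field; lra).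
  lra.
Qed.

Section CauchyEquation.

Variable h : R -> R.
Hypothesis h_add : forall u v, 0 < u -> 0 < v -> h (u + v) = h u + h v.
Hypothesis h_mono : forall u v, 0 < u -> u <= v -> h u <= h v.

Lemma additive_INR_mult n u : 0 < u -> h (INR (S n) * u) = INR (S n) * h u.
Proof.
  intro Hu. induction n as [|n IH]; [simpl; rewrite !Rmult_1_l; reflexivity|].
  rewrite S_INR, Rmult_plus_distr_r, Rmult_1_l, h_add, IH; [ring | | exact Hu].
  apply Rmult_lt_0_compat; [apply lt_0_INR; lia | exact Hu].
Qed.

Lemma additive_monotone_nonneg u : 0 < u -> 0 <= h u.
Proof. intro Hu. pose proof (h_mono u (u + u)). rewrite h_add in H by lra. lra. Qed.

(* Squeezing [n u] between consecutive integers [m] and [m + 1] gives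
   [|h u - h 1 * u| * n <= h 1]. *)
Lemma additive_monotone_linear u : 0 < u -> h u = h 1 * u.
Proof.
  intro Hu. set (k := h 1).
  assert (Hk : forall m, h (INR (S m)) = INR (S m) * k).
  { intro m. rewrite <- (Rmult_1_r (INR (S m))) at 1. apply additive_INR_mult; lra. }
  enough (h u - k * u = 0) by lra.
  apply (Rabs_mult_INR_bounded _ k). intro n.
  assert (Hnu : 0 < INR (S n) * u) by (apply Rmult_lt_0_compat; [apply lt_0_INR; lia | exact Hu]).
  destruct (INR_floor (INR (S n) * u)) as [m [Hm Hm1]]; [lra|].
  assert (Hup : h (INR (S n) * u) <= (INR m + 1) * k).
  { rewrite <- S_INR, <- Hk. apply h_mono; [exact Hnu | rewrite (S_INR m); lra]. }
  assert (Hlo : INR m * k <= h (INR (S n) * u)).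
  { destruct m as [|m].
    - rewrite Rmult_0_l. apply additive_monotone_nonneg, Hnu.
    - rewrite <- Hk. apply h_mono; [apply lt_0_INR; lia | exact Hm]. }
  rewrite additive_INR_mult in Hup, Hlo by exact Hu.
  assert (Hk0 : 0 <= k) by (apply additive_monotone_nonneg; lra).
  assert (INR m * k <= INR (S n) * u * k <= (INR m + 1) * k)
    by (split; apply Rmult_le_compat_r; lra).
  pose proof (pos_INR (S n)).
  destruct (Rcase_abs (h u - k * u));
    [rewrite Rabs_left | rewrite Rabs_right]; nra.
Qed.

End CauchyEquation.

Lemma ln_le x y : 0 < x -> x <= y -> ln x <= ln y.
Proof. intros Hx [Hxy| ->]; [left; apply ln_increasing | right]; lra. Qed.

(* [u |-> - ln (G (exp (- u)))] is additive and monotone on [(0, +oo)]. *)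
Lemma multiplicative_monotone_Rpower (G : R -> R) :
  (forall s t, 0 < s < 1 -> 0 < t < 1 -> G (s * t) = G s * G t) ->
  (forall t, 0 < t < 1 -> 0 < G t) ->
  (forall s t, 0 < s -> s <= t -> t < 1 -> G s <= G t) ->
  exists d, forall t, 0 < t < 1 -> G t = Rpower t d.
Proof.
  intros G_mult G_pos G_mono.
  set (h := fun u => - ln (G (exp (- u)))).
  assert (Hexp : forall u, 0 < u -> 0 < exp (- u) < 1).
  { intros u Hu. split; [apply exp_pos|]. rewrite <- exp_0. apply exp_increasing. lra. }
  assert (h_add : forall u v, 0 < u -> 0 < v -> h (u + v) = h u + h v).
  { intros u v Hu Hv. unfold h.
    rewrite Ropp_plus_distr, exp_plus, G_mult, ln_mult by auto using G_pos. ring. }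
  assert (h_mono : forall u v, 0 < u -> u <= v -> h u <= h v).
  { intros u v Hu Huv. unfold h. apply Ropp_le_contravar, ln_le; [apply G_pos, Hexp; lra|].
    apply G_mono; [apply exp_pos | | apply Hexp; lra].
    destruct Huv as [Huv| ->]; [left; apply exp_increasing | right]; lra. }
  exists (h 1). intros t Ht.
  assert (Hln : ln t < 0) by (rewrite <- ln_1; apply ln_increasing; lra).
  pose proof (additive_monotone_linear h h_add h_mono (- ln t) ltac:(lra)) as Hlin.
  unfold h at 1 in Hlin. rewrite Ropp_involutive, exp_ln in Hlin by lra.
  unfold Rpower. rewrite <- (exp_ln (G t)) by exact (G_pos t Ht). f_equal. lra.
Qed.

Lemma rpow_pos x d : 0 < x -> rpow x d = Rpower x d.
Proof. intro Hx. unfold rpow. destruct (Rle_dec x 0); [lra | reflexivity]. Qed.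

Lemma rpow_0 d : rpow 0 d = 0.
Proof. unfold rpow. destruct (Rle_dec 0 0); [reflexivity | lra]. Qed.

Lemma rpow_1 d : rpow 1 d = 1.
Proof. rewrite rpow_pos by lra. unfold Rpower. rewrite ln_1, Rmult_0_r. apply exp_0. Qed.

Lemma rpow_gt_0 x d : 0 < x -> 0 < rpow x d.
Proof. intro Hx. rewrite rpow_pos by exact Hx. apply exp_pos. Qed.

Lemma rpow_mult x y d : 0 <= x -> 0 <= y -> rpow x d * rpow y d = rpow (x * y) d.
Proof.
  intros [Hx| <-] [Hy| <-]; rewrite ?Rmult_0_l, ?Rmult_0_r, ?rpow_0; try ring.
  rewrite !rpow_pos by nra. apply Rpower_mult_distr; assumption.
Qed.

Lemma rpow_ge_1 x d : 0 < x < 1 -> d <= 0 -> 1 <= rpow x d.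
Proof.
  intros Hx Hd. rewrite rpow_pos, <- exp_0 by lra. unfold Rpower.
  assert (ln x < 0) by (rewrite <- ln_1; apply ln_increasing; lra).
  destruct (Req_dec d 0) as [->|]; [rewrite Rmult_0_l; lra|].
  left. apply exp_increasing. nra.
Qed.

Lemma fold_range y : 0 <= y <= 1 -> 0 <= 2 * Rmin y (1 - y) <= 1.
Proof. intro Hy. unfold Rmin. destruct (Rle_dec y (1 - y)); lra. Qed.

Lemma fold_le_iff y t : 0 <= y <= 1 -> t < 1 ->
  (2 * Rmin y (1 - y) <= t <-> y <= t / 2 \/ 1 - t / 2 <= y).
Proof. intros Hy Ht. unfold Rmin. destruct (Rle_dec y (1 - y)); lra. Qed.

Lemma Rmax_fold_ge_half y : 1/2 <= Rmax y (1 - y).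
Proof. unfold Rmax. destruct (Rle_dec y (1 - y)); lra. Qed.

Lemma Rmax_fold_le_iff y t : 1/2 <= t -> (Rmax y (1 - y) <= t <-> 1 - t <= y <= t).
Proof. intro Ht. unfold Rmax. destruct (Rle_dec y (1 - y)); lra. Qed.

(* [a = F x], [b = F (1 - x)], [u = G (2 x)], [c = F (1/2)] *)
Lemma tails_split a b c u : a + (1 - b) = u ->
  (b - c = (1 - c) * (b - a) <-> a = c * u /\ b = 1 - (1 - c) * u).
Proof. intros <-. split; [intro H; split | intros [Ha _]]; nra. Qed.

Lemma power_cdf_form_iff (F : R -> R) c d :
  (forall x, (0 <= x <= 1/2 -> F x = c * rpow 2 d * rpow x d) /\
             (1/2 <= x <= 1 -> F x = 1 - (1 - c) * rpow 2 d * rpow (1 - x) d)) <->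
  (forall x, 0 <= x <= 1/2 -> F x = c * rpow (2 * x) d /\ F (1 - x) = 1 - (1 - c) * rpow (2 * x) d).
Proof.
  split.
  - intros HF x Hx. rewrite <- rpow_mult by lra.
    destruct (HF x) as [HF0 _]. destruct (HF (1 - x)) as [_ HF1].
    rewrite HF0, HF1 by lra. replace (1 - (1 - x)) with x by ring. split; ring.
  - intros HF x. split; intro Hx.
    + rewrite Rmult_assoc, rpow_mult by lra. apply HF, Hx.
    + replace x with (1 - (1 - x)) at 1 by ring.
      rewrite Rmult_assoc, rpow_mult by lra. apply HF. lra.
Qed.

Section FoldedVariable.

Variable Sp : prob_space.
Variable Y : Omega Sp -> R.
Hypothesis hY : random_variable Sp Y.
Hypothesis hrange : forall w, 0 <= Y w <= 1.
Hypothesis hcont : forall x, continuity_pt (cdf Sp Y) x.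

Local Notation F := (cdf Sp Y).
Local Notation G := (cdf Sp (fun w => 2 * Rmin (Y w) (1 - Y w))).

Lemma cdf_at_0 : F 0 = 0.
Proof.
  rewrite <- (P_eq Sp Y hY hcont 0) at 2.
  apply P_ext; intro w. pose proof (hrange w). split; intro; lra.
Qed.

Lemma cdf_at_1 : F 1 = 1.
Proof.
  transitivity (P Sp (fun _ => True)); [|apply P_full].
  apply P_ext; intro w. pose proof (hrange w). split; [tauto | intros _; lra].
Qed.

Lemma fold_random_variable : random_variable Sp (fun w => 2 * Rmin (Y w) (1 - Y w)).
Proof.
  intro t. destruct (Rlt_dec t 1) as [Ht|Ht].
  - apply (meas_ext Sp (fun w => Y w <= t / 2 \/ 1 - t / 2 <= Y w)).
    + intro w. symmetry. apply fold_le_iff; auto.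
    + apply meas_or; [apply hY | apply meas_ge, hY].
  - apply (meas_ext Sp (fun _ => True)); [|apply meas_full].
    intro w. pose proof (fold_range _ (hrange w)). split; intros; [lra | exact I].
Qed.

Lemma cdf_fold_lt_0 t : t < 0 -> G t = 0.
Proof.
  intro Ht. transitivity (P Sp (fun _ => False)); [|apply P_False]. apply P_ext; intro w.
  pose proof (fold_range _ (hrange w)). split; [lra | tauto].
Qed.

Lemma cdf_fold_ge_1 t : 1 <= t -> G t = 1.
Proof.
  intro Ht. transitivity (P Sp (fun _ => True)); [|apply P_full]. apply P_ext; intro w.
  pose proof (fold_range _ (hrange w)). split; [tauto | lra].
Qed.

Lemma cdf_fold x : 0 <= x <= 1/2 -> G (2 * x) = F x + (1 - F (1 - x)).
Proof.
  intro Hx. destruct (Req_dec x (1/2)) as [->|Hx2].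
  { rewrite cdf_fold_ge_1 by lra. replace (1 - 1/2) with (1/2) by field. ring. }
  rewrite <- (P_ge Sp Y hY hcont). unfold cdf.
  rewrite <- P_or_disjoint; [| apply hY | apply meas_ge, hY | intros; lra].
  apply P_ext; intro w. rewrite fold_le_iff by (auto; lra).
  replace (2 * x / 2) with x by field. tauto.
Qed.

Lemma cdf_fold_monotone s t : s <= t -> G s <= G t.
Proof. intro Hst. apply P_mono; try apply fold_random_variable. intros; lra. Qed.

Lemma exists_cdf_fold_lt_1 : exists t, 0 < t < 1 /\ G t < 1.
Proof.
  destruct (continuity_pt_ball _ _ (1/4) (hcont 0)) as [del0 [Hdel0 Hball0]]; [lra|].
  destruct (continuity_pt_ball _ _ (1/4) (hcont 1)) as [del1 [Hdel1 Hball1]]; [lra|].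
  set (x := Rmin (Rmin del0 del1) (1/2) / 2).
  assert (Hx : 0 < x /\ x <= del0 / 2 /\ x <= del1 / 2 /\ x <= 1/4).
  { unfold x.
    pose proof (Rmin_l (Rmin del0 del1) (1/2)). pose proof (Rmin_r (Rmin del0 del1) (1/2)).
    pose proof (Rmin_l del0 del1). pose proof (Rmin_r del0 del1).
    pose proof (Rmin_glb_lt (Rmin del0 del1) (1/2) 0 (Rmin_glb_lt _ _ _ Hdel0 Hdel1)). lra. }
  exists (2 * x). split; [lra|]. rewrite cdf_fold by lra.
  specialize (Hball0 x). specialize (Hball1 (1 - x)).
  rewrite cdf_at_0 in Hball0. rewrite cdf_at_1 in Hball1.
  rewrite Rabs_right in Hball0 by lra. rewrite Rabs_left in Hball1 by lra.
  apply Rabs_def2 in Hball0; [| lra]. apply Rabs_def2 in Hball1; [| lra].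
  lra.
Qed.

Lemma fold_scaling_iff :
  (forall a, 0 < a < 1 ->
     cond_eq_in_dist Sp
       (fun w => 2 * Rmin (Y w) (1 - Y w))
       (fun w => 2 * Rmin (Y w) (1 - Y w) <= a)
       (fun w => a * (2 * Rmin (Y w) (1 - Y w)))) <->
  (forall a, 0 < a < 1 -> 0 < G a /\ forall z, G (Rmin z a) = G (z / a) * G a).
Proof.
  assert (Hevents : forall a z, 0 < a ->
    P Sp (fun w => 2 * Rmin (Y w) (1 - Y w) <= z /\ 2 * Rmin (Y w) (1 - Y w) <= a) = G (Rmin z a) /\
    P Sp (fun w => a * (2 * Rmin (Y w) (1 - Y w)) <= z) = G (z / a)).
  { intros a z Ha. split; apply P_ext; intro w.
    - split; [intros []; apply Rmin_glb; assumption|].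
      intro H. split; eapply Rle_trans; eauto using Rmin_l, Rmin_r.
    - replace z with (a * (z / a)) at 1 by (field; lra).
      split; intro; [apply (Rmult_le_reg_l a) | apply Rmult_le_compat_l]; lra. }
  unfold cond_eq_in_dist; cbv beta. split; intros H a Ha; destruct (H a Ha) as [HGa Hz];
    change (P Sp (fun w => 2 * Rmin (Y w) (1 - Y w) <= a)) with (G a) in *;
    split; auto; intro z; destruct (Hevents a z ltac:(lra)) as [Hmin Hdiv].
  - rewrite <- Hmin, <- Hdiv, <- (Hz z). field. lra.
  - rewrite Hmin, Hdiv, Hz. field. lra.
Qed.

Lemma power_law_of_scaling :
  (forall a, 0 < a < 1 -> 0 < G a /\ forall z, G (Rmin z a) = G (z / a) * G a) ->
  exists d, 0 < d /\ forall t, 0 <= t <= 1 -> G t = rpow t d.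
Proof.
  intro Hscale.
  destruct (multiplicative_monotone_Rpower G) as [d Hd].
  - intros s t Hs Ht. destruct (Hscale t Ht) as [_ Hz]. specialize (Hz (s * t)).
    rewrite Rmin_left in Hz by nra. rewrite Hz. f_equal. f_equal. field. lra.
  - intros t Ht. apply Hscale, Ht.
  - intros s t _ Hst _. apply cdf_fold_monotone, Hst.
  - exists d. split.
    + destruct exists_cdf_fold_lt_1 as [t0 [Ht0 HGt0]].
      apply Rnot_le_lt. intro Hd0.
      pose proof (rpow_ge_1 t0 d Ht0 Hd0). rewrite rpow_pos, <- Hd in * by lra. lra.
    + intros t Ht.
      destruct (Req_dec t 0) as [->|Ht0]; [|destruct (Req_dec t 1) as [->|Ht1]].
      * rewrite rpow_0. replace 0 with (2 * 0) at 1 by ring.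
        rewrite cdf_fold, cdf_at_0, Rminus_0_r, cdf_at_1 by lra. ring.
      * rewrite rpow_1. apply cdf_fold_ge_1. lra.
      * rewrite rpow_pos by lra. apply Hd. lra.
Qed.

Lemma scaling_of_power_law d :
  (forall t, 0 <= t <= 1 -> G t = rpow t d) ->
  forall a, 0 < a < 1 -> 0 < G a /\ forall z, G (Rmin z a) = G (z / a) * G a.
Proof.
  intros Hpow a Ha. rewrite Hpow by lra. split; [apply rpow_gt_0; lra|]. intro z.
  set (s := z / a). replace z with (s * a) by (unfold s; field; lra).
  destruct (Rlt_dec s 0) as [Hs|Hs]; [|destruct (Rle_dec s 1) as [Hs1|Hs1]].
  - rewrite Rmin_left, !cdf_fold_lt_0 by nra. ring.
  - rewrite Rmin_left, !Hpow, rpow_mult by nra. reflexivity.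
  - rewrite Rmin_right, (cdf_fold_ge_1 s), Hpow by nra. ring.
Qed.

Lemma indep_fold_iff :
  indep Sp (indicator Sp (fun w => Y w <= 1/2) (fun w => Rle_dec (Y w) (1/2)))
           (fun w => Rmax (Y w) (1 - Y w)) <->
  forall x, 0 <= x <= 1/2 -> F (1 - x) - F (1/2) = (1 - F (1/2)) * (F (1 - x) - F x).
Proof.
  rewrite indep_indicator_iff.
  assert (Hhalf : P Sp (fun w => ~ Y w <= 1/2) = 1 - F (1/2)).
  { rewrite <- (P_gt Sp Y hY). apply P_ext; intro; lra. }
  assert (Hcore : forall y, 1/2 <= y <= 1 ->
    P Sp (fun w => ~ Y w <= 1/2 /\ Rmax (Y w) (1 - Y w) <= y) = F y - F (1/2) /\
    P Sp (fun w => Rmax (Y w) (1 - Y w) <= y) = F y - F (1 - y)).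
  { intros y Hy. rewrite <- P_in_Ioc, <- P_in_Icc by (auto; lra).
    split; apply P_ext; intro w; rewrite Rmax_fold_le_iff by lra; lra. }
  rewrite Hhalf. split.
  - intros Hind x Hx. destruct (Hcore (1 - x)) as [H1 H2]; [lra|].
    replace (1 - (1 - x)) with x in H2 by ring. rewrite <- H1, <- H2. apply Hind.
  - intros Htails y.
    destruct (Rlt_dec y (1/2)) as [Hy|Hy]; [|destruct (Rle_dec y 1) as [Hy1|Hy1]].
    + rewrite (P_ext Sp (fun w => _ /\ _) (fun _ => False)),
        (P_ext Sp (fun w => Rmax _ _ <= y) (fun _ => False)), P_False; [ring | |];
        intro w; pose proof (Rmax_fold_ge_half (Y w)); split; intros; tauto || lra.
    + destruct (Hcore y) as [-> ->]; [lra|].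
      pose proof (Htails (1 - y) ltac:(lra)) as H.
      replace (1 - (1 - y)) with y in H by ring. exact H.
    + rewrite (P_ext Sp (fun w => Rmax _ _ <= y) (fun _ => True)), P_full.
      * rewrite Rmult_1_r, <- Hhalf. apply P_ext; intro w.
        pose proof (hrange w). unfold Rmax. destruct Rle_dec; split; intros; tauto || lra.
      * intro w. pose proof (hrange w). unfold Rmax. destruct Rle_dec; split; intros; tauto || lra.
Qed.

Lemma power_law_tails_iff :
  ((exists d, 0 < d /\ forall t, 0 <= t <= 1 -> G t = rpow t d) /\
   forall x, 0 <= x <= 1/2 -> F (1 - x) - F (1/2) = (1 - F (1/2)) * (F (1 - x) - F x)) <->
  exists c d, 0 <= c <= 1 /\ 0 < d /\ forall x, 0 <= x <= 1/2 ->
    F x = c * rpow (2 * x) d /\ F (1 - x) = 1 - (1 - c) * rpow (2 * x) d.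
Proof.
  split.
  - intros [[d [Hd Hpow]] Htails]. exists (F (1/2)), d.
    split; [split; [apply P_nonneg | apply P_le_1]; apply hY|]. split; [exact Hd|].
    intros x Hx. apply tails_split; [| apply Htails, Hx].
    rewrite <- cdf_fold, Hpow by lra. reflexivity.
  - intros [c [d [Hc [Hd Hform]]]].
    assert (Hfold : forall x, 0 <= x <= 1/2 -> F x + (1 - F (1 - x)) = rpow (2 * x) d).
    { intros x Hx. destruct (Hform x Hx) as [-> ->]. ring. }
    assert (HF : F (1/2) = c).
    { destruct (Hform (1/2)) as [H _]; [lra|]. rewrite H. replace (2 * (1/2)) with 1 by field.
      rewrite rpow_1. ring. }
    split.
    + exists d. split; [exact Hd|]. intros t Ht.
      replace t with (2 * (t / 2)) by field. rewrite cdf_fold by lra. apply Hfold. lra.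
    + intros x Hx. rewrite HF. apply (tails_split _ _ _ _ (Hfold x Hx)), Hform, Hx.
Qed.

End FoldedVariable.

Theorem lemma2 (S : prob_space) (Y : Omega S -> R)
  (hY : random_variable S Y)
  (hrange : forall w, 0 <= Y w <= 1)
  (hcont : forall x, continuity_pt (cdf S Y) x) :
  ( (forall a, 0 < a < 1 ->
       cond_eq_in_dist S
         (fun w => 2 * Rmin (Y w) (1 - Y w))
         (fun w => 2 * Rmin (Y w) (1 - Y w) <= a)
         (fun w => a * (2 * Rmin (Y w) (1 - Y w))))
    /\ indep S (indicator S (fun w => Y w <= 1/2) (fun w => Rle_dec (Y w) (1/2)))
               (fun w => Rmax (Y w) (1 - Y w)) )
  <->
  (exists c delta, 0 <= c <= 1 /\ 0 < delta /\
     forall x,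
       (0 <= x <= 1/2 -> cdf S Y x = c * rpow 2 delta * rpow x delta) /\
       (1/2 <= x <= 1 -> cdf S Y x = 1 - (1 - c) * rpow 2 delta * rpow (1 - x) delta)).
Proof.
  rewrite (fold_scaling_iff S Y), (indep_fold_iff S Y hY hrange hcont). split.
  - intros [Hscale Htails].
    destruct (proj1 (power_law_tails_iff S Y hY hrange hcont)
                (conj (power_law_of_scaling S Y hY hrange hcont Hscale) Htails))
      as [c [d [Hc [Hd Hform]]]].
    exists c, d. split; [exact Hc|]. split; [exact Hd|].
    apply power_cdf_form_iff, Hform.
  - intros [c [d [Hc [Hd Hform]]]].
    destruct (proj2 (power_law_tails_iff S Y hY hrange hcont)) as [[d' [_ Hpow]] Htails].
    { exists c, d. split; [exact Hc|]. split; [exact Hd|].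
      apply power_cdf_form_iff, Hform. }
    split; [exact (scaling_of_power_law S Y hrange d' Hpow) | exact Htails].
Qed.
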